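(* Let $\sigma>0$ and let $\vec\alpha,\vec\beta$ be non-negative sequences, neither identically zero, with $\sum_n n\alpha_n<\infty$ and $\sum_n n\beta_n<\infty$. Then for all integers $m,n\ge0$ and $L\ge1$, $$\frac{1}{2\pi}\int_{-2}^2 u_m(x)u_n(x)(x+\sigma)^L\sqrt{4-x^2}\,dx=\sum_{\vec\gamma\in\mathcal M^{(L)}_{m,n}}w(\vec\gamma),$$ and for real $z_0,z_1$ with $|z_0|,|z_1|\le1$, $$\mathbb E\big[z_0^{\gamma^{(L)}_0}z_1^{\gamma^{(L)}_L}\big]=\frac{\mathsf M_{\vec\alpha,\vec\beta,L}(z_0,z_1)}{\mathsf M_{\vec\alpha,\vec\beta,L}(1,1)},\qquad \mathsf M_{\vec\alpha,\vec\beta,L}(z_0,z_1):=\frac{1}{2\pi}\int_{-2}^2\Phi_{\vec\alpha}(z_0,x)\Phi_{\vec\beta}(z_1,x)(x+\sigma)^L\sqrt{4-x^2}\,dx,$$ where $\Phi_{\vec\alpha}(z,x)=\sum_{n\ge0}\alpha_nz^nu_n(x)$ and $\Phi_{\vec\beta}(z,x)=\sum_{n\ge0}\beta_nz^nu_n(x)$.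
   Context: $u_n$ are the monic Chebyshev polynomials of the second kind: $u_{-1}=0$, $u_0=1$, $xu_n(x)=u_{n+1}(x)+u_{n-1}(x)$ for $n\ge0$ (so $u_n(2\cos\theta)=\sin((n+1)\theta)/\sin\theta$). A Motzkin path of length $L$ is a sequence $(\gamma_0,\dots,\gamma_L)$ of non-negative integers with $|\gamma_k-\gamma_{k-1}|\le1$; $\mathcal M^{(L)}_{m,n}$ is the set of those with $\gamma_0=m$, $\gamma_L=n$, and $\mathcal M^{(L)}=\bigcup_{m,n}\mathcal M^{(L)}_{m,n}$. Weight: $w(\vec\gamma)=\sigma^{\#\{k:\gamma_k=\gamma_{k-1}\}}$. $(\gamma^{(L)}_0,\dots,\gamma^{(L)}_L)$ is a random path with law $\Pr_L(\vec\gamma)=\alpha_{\gamma_0}\beta_{\gamma_L}w(\vec\gamma)/\sum_{\vec\eta\in\mathcal M^{(L)}}\alpha_{\eta_0}\beta_{\eta_L}w(\vec\eta)$. *)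

From Stdlib Require Import Reals Lra Lia List.
From Coquelicot Require Import Coquelicot.
Import ListNotations.
Open Scope R_scope.

(* Monic Chebyshev polynomials of the second kind:
   u_0 = 1, u_1 = x, u_{n+2} = x u_{n+1} - u_n  (equivalent to x u_n = u_{n+1} + u_{n-1}, u_{-1}=0). *)
Fixpoint cheb_u (n : nat) (x : R) : R :=
  match n with
  | O => 1
  | S O => x
  | S ((S k) as k1) => x * cheb_u k1 x - cheb_u k x
  end.

(* A path (gamma_0,...,gamma_L) is represented as the list [gamma_0; ...; gamma_L]. *)
Fixpoint adjacent_ok (g : list nat) : Prop :=
  match g with
  | a :: ((b :: _) as t) => (a <= b + 1 /\ b <= a + 1)%nat /\ adjacent_ok t
  | _ => True
  end.

(* Motzkin path of length L (non-negativity is automatic for nat). *)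
Definition is_motzkin (L : nat) (g : list nat) : Prop :=
  length g = S L /\ adjacent_ok g.

Fixpoint flat_steps (g : list nat) : nat :=
  match g with
  | a :: ((b :: _) as t) => ((if Nat.eqb a b then 1 else 0) + flat_steps t)%nat
  | _ => O
  end.

Definition path_weight (sigma : R) (g : list nat) : R := sigma ^ flat_steps g.

Definition path_start (g : list nat) : nat := hd O g.
Definition path_end (g : list nat) : nat := last g O.

(* Enumeration (without repetitions) of all Motzkin paths of length L starting at m:
   the path m :: p where p ranges over paths of length L-1 starting at m-1 (if m>0), m, m+1. *)
Fixpoint motzkin_from (m L : nat) : list (list nat) :=
  match L with
  | O => [[m]]
  | S L' =>
      map (cons m)
        ((match m with O => [] | S m' => motzkin_from m' L' end)
         ++ motzkin_from m L' ++ motzkin_from (S m) L')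
  end.

Definition sumR (l : list R) : R := fold_right Rplus 0 l.

Definition motzkin_weight_sum (sigma : R) (L m n : nat) : R :=
  sumR (map (path_weight sigma)
         (filter (fun g => Nat.eqb (path_end g) n) (motzkin_from m L))).

(* sum over the (countable) set M^{(L)} = union over m of paths starting at m *)
Definition sum_over_paths (L : nat) (F : list nat -> R) : R :=
  Series (fun m => sumR (map F (motzkin_from m L))).

Definition partition_fn (alpha beta : nat -> R) (sigma : R) (L : nat) : R :=
  sum_over_paths L (fun g => alpha (path_start g) * beta (path_end g) * path_weight sigma g).

Definition path_prob (alpha beta : nat -> R) (sigma : R) (L : nat) (g : list nat) : R :=
  alpha (path_start g) * beta (path_end g) * path_weight sigma g / partition_fn alpha beta sigma L.

Definition expect_gen (alpha beta : nat -> R) (sigma : R) (L : nat) (z0 z1 : R) : R :=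
  sum_over_paths L (fun g =>
    path_prob alpha beta sigma L g * z0 ^ path_start g * z1 ^ path_end g).

Definition Phi (alpha : nat -> R) (z x : R) : R :=
  Series (fun n => alpha n * z ^ n * cheb_u n x).

Definition Mfun (alpha beta : nat -> R) (sigma : R) (L : nat) (z0 z1 : R) : R :=
  / (2 * PI) * RInt (fun x => Phi alpha z0 x * Phi beta z1 x * (x + sigma) ^ L
                              * sqrt (4 - x ^ 2)) (-2) 2.

From Stdlib Require Import Reals Lra Lia List.
From Coquelicot Require Import Coquelicot.
Import ListNotations.
Open Scope R_scope.

(* Substituting x = 2 cos t turns u_m(x) u_n(x) sqrt(4 - x^2) dx into
   -4 sin((m+1)t) sin((n+1)t) dt, so the u_n are orthogonal for the semicircle weight, with
   squared norm 2 pi.  The recurrence (x + sigma) u_m = u_(m+1) + sigma u_m + u_(m-1) is the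
   first-step decomposition of a weighted Motzkin path, so by induction on L the moment
   (1/2 pi) int u_m u_n (x + sigma)^L sqrt(4 - x^2) is the weight W_L(m, n) of the paths
   from m to n.
   Since |u_n| <= n + 1 on [-2, 2] and sum n alpha_n < oo, the series Phi_alpha and Phi_beta
   converge uniformly there; integrating term by term gives
   M(z0, z1) = sum_(m,n) alpha_m beta_n z0^m z1^n W_L(m, n), which is also what the expectation
   becomes, up to the partition function M(1, 1), once paths are grouped by their endpoints. *)

Lemma continuous_of_ex_derive (f : R -> R) x : ex_derive f x -> continuous f x.
Proof. apply (ex_derive_continuous (K := R_AbsRing) (V := R_NormedModule)). Qed.

Lemma is_RInt_unique_R (f : R -> R) a b l : is_RInt f a b l -> RInt f a b = l.
Proof. apply (is_RInt_unique (V := R_CompleteNormedModule)). Qed.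

Lemma is_RInt_Rplus (f g : R -> R) a b (If Ig : R) :
  is_RInt f a b If -> is_RInt g a b Ig -> is_RInt (fun x => f x + g x) a b (If + Ig).
Proof. apply (is_RInt_plus (V := R_NormedModule)). Qed.

Lemma is_RInt_Rmult_l (f : R -> R) a b k (If : R) :
  is_RInt f a b If -> is_RInt (fun x => k * f x) a b (k * If).
Proof. apply (is_RInt_scal (V := R_NormedModule)). Qed.

Lemma is_RInt_ext_eq (f g : R -> R) a b (l l' : R) :
  (forall x, Rmin a b < x < Rmax a b -> f x = g x) -> l = l' ->
  is_RInt f a b l -> is_RInt g a b l'.
Proof. intros Hfg <-. apply is_RInt_ext. exact Hfg. Qed.

Lemma is_RInt_RInt_continuous (f : R -> R) a b :
  (forall x, continuous f x) -> is_RInt f a b (RInt f a b).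
Proof. intros Hf. apply (RInt_correct (V := R_CompleteNormedModule)), ex_RInt_continuous. auto. Qed.

Lemma is_RInt_antiderivative (F f : R -> R) a b :
  (forall x, is_derive F x (f x)) -> (forall x, continuous f x) ->
  is_RInt f a b (F b - F a).
Proof. intros HF Hf. apply (is_RInt_derive F f); auto. Qed.

Lemma ex_series_Rabs_le (a B : nat -> R) :
  (forall n, Rabs (a n) <= B n) -> ex_series B -> ex_series a.
Proof. apply (ex_series_le (K := R_AbsRing) (V := R_CompleteNormedModule)). Qed.

Lemma Series_tail_le (a B : nat -> R) :
  (forall n, Rabs (a n) <= B n) -> ex_series B ->
  forall K, Rabs (Series a - sum_n a K) <= Series B - sum_n B K.
Proof.
  intros HaB HB K.
  assert (Ha : ex_series a) by (apply (ex_series_Rabs_le a B); auto).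
  rewrite !sum_n_Reals, (Series_incr_n a (S K)), (Series_incr_n B (S K)) by (lia || auto).
  simpl pred.
  replace (sum_f_R0 a K + _ - sum_f_R0 a K) with (Series (fun k => a (S K + k)%nat)) by ring.
  replace (sum_f_R0 B K + _ - sum_f_R0 B K) with (Series (fun k => B (S K + k)%nat)) by ring.
  assert (HBK : ex_series (fun k => B (S K + k)%nat)) by (apply ex_series_incr_n; auto).
  assert (HaK : ex_series (fun k => Rabs (a (S K + k)%nat))).
  { apply (ex_series_Rabs_le _ (fun k => B (S K + k)%nat)); [|exact HBK].
    intros n. rewrite Rabs_Rabsolu. apply HaB. }
  eapply Rle_trans; [apply Series_Rabs, HaK|apply Series_le; auto using Rabs_pos].
Qed.

Lemma Series_tail_small (B : nat -> R) (eps : posreal) :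
  ex_series B -> eventually (fun K => Series B - sum_n B K < eps).
Proof.
  intros HB.
  generalize (proj1 (filterlim_locally _ _) (Series_correct B HB) eps).
  apply filter_imp. intros K HK.
  change (Rabs (sum_n B K - Series B) < eps) in HK.
  apply Rabs_def2 in HK. lra.
Qed.

Lemma is_RInt_sum_n (f : nat -> R -> R) (I : nat -> R) a b :
  (forall n, is_RInt (f n) a b (I n)) ->
  forall K, is_RInt (fun x => sum_n (fun n => f n x) K) a b (sum_n I K).
Proof.
  intros HI K. induction K as [|K IH].
  - rewrite sum_O. eapply is_RInt_ext_eq; [| |apply (HI 0%nat)].
    + intros x _. rewrite sum_O. reflexivity.
    + reflexivity.
  - rewrite sum_Sn. eapply is_RInt_ext_eq; [| |apply (is_RInt_Rplus _ _ _ _ _ _ IH (HI (S K)))].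
    + intros x _. rewrite sum_Sn. reflexivity.
    + reflexivity.
Qed.

Lemma is_RInt_Series (f : nat -> R -> R) (B I : nat -> R) a b :
  ex_series B -> (forall n x, Rabs (f n x) <= B n) ->
  (forall n, is_RInt (f n) a b (I n)) ->
  is_RInt (fun x => Series (fun n => f n x)) a b (Series I).
Proof.
  intros HB Hf HI.
  set (F := fun K x => sum_n (fun n => f n x) K : R).
  set (g := fun x => Series (fun n => f n x)).
  assert (Hunif : filterlim F eventually (locally (g : fct_UniformSpace R R_UniformSpace))).
  { apply filterlim_locally. intros eps.
    generalize (Series_tail_small B eps HB). apply filter_imp. intros K HK x.
    change (Rabs (F K x - g x) < eps).
    rewrite Rabs_minus_sym. eapply Rle_lt_trans; [|exact HK].
    apply Series_tail_le; auto. }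
  destruct (filterlim_RInt (V := R_CompleteNormedModule) F a b eventually eventually_filter _ _
              (is_RInt_sum_n f I a b HI) Hunif) as (If & HIf & Hint).
  rewrite (is_series_unique I If HIf). exact Hint.
Qed.

Lemma is_RInt_Series_on (f : nat -> R -> R) (B I : nat -> R) a b :
  a <= b -> ex_series B -> (forall n x, a <= x <= b -> Rabs (f n x) <= B n) ->
  (forall n, is_RInt (f n) a b (I n)) ->
  is_RInt (fun x => Series (fun n => f n x)) a b (Series I).
Proof.
  intros Hab HB Hf HI.
  (* [is_RInt_Series] needs the bound on all of R: clamp the argument to [a, b], which does not
     change the integrals. *)
  set (c := fun x => Rmax a (Rmin b x)).
  assert (Hc : forall x, a <= c x <= b).
  { intros x. unfold c. split; [apply Rmax_l|]. apply Rmax_lub; [lra|apply Rmin_l]. }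
  assert (Hcid : forall x, Rmin a b < x < Rmax a b -> c x = x).
  { intros x Hx. rewrite Rmin_left, Rmax_right in Hx by lra.
    unfold c. rewrite Rmin_right, Rmax_right; lra. }
  apply (is_RInt_ext_eq (fun x => Series (fun n => f n (c x))) _ _ _ (Series I)).
  - intros x Hx. rewrite Hcid; auto.
  - reflexivity.
  - apply (is_RInt_Series (fun n x => f n (c x)) B); auto.
    intros n. apply (is_RInt_ext_eq (f n) _ _ _ (I n)); auto.
    intros x Hx. rewrite Hcid; auto.
Qed.

Lemma is_RInt_Series_mul (f : nat -> R -> R) (h : R -> R) (B I : nat -> R) (M : R) a b :
  a <= b -> ex_series B ->
  (forall n x, a <= x <= b -> Rabs (f n x) <= B n) ->
  (forall x, a <= x <= b -> Rabs (h x) <= M) ->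
  (forall n, is_RInt (fun x => f n x * h x) a b (I n)) ->
  is_RInt (fun x => Series (fun n => f n x) * h x) a b (Series I).
Proof.
  intros Hab HB Hf Hh HI.
  eapply is_RInt_ext_eq; [intros x _; apply Series_scal_r | reflexivity |].
  apply (is_RInt_Series_on _ (fun n => B n * M)); auto.
  - apply ex_series_scal_r, HB.
  - intros n x Hx. rewrite Rabs_mult.
    apply Rmult_le_compat; auto using Rabs_pos.
Qed.

Lemma Series_eventually_zero (a : nat -> R) N :
  (forall n, (N < n)%nat -> a n = 0) -> Series a = sum_f_R0 a N.
Proof.
  intros Ha. apply is_series_unique, filterlim_locally. intros eps. exists N. intros K HK.
  rewrite sum_n_Reals. replace (sum_f_R0 a K) with (sum_f_R0 a N); [apply ball_center|].
  induction HK as [|K HK IH]; [reflexivity|].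
  simpl. rewrite <- IH, Ha by lia. ring.
Qed.

Lemma sum_f_R0_indicator (c : nat -> R) e N :
  (e <= N)%nat -> sum_f_R0 (fun n => if Nat.eqb e n then c n else 0) N = c e.
Proof.
  induction N as [|N IH]; intros He; simpl.
  - replace e with 0%nat by lia. reflexivity.
  - destruct (Nat.eqb_spec e (S N)) as [->|Hne].
    + rewrite sum_eq_R0; [ring|]. intros n Hn.
      destruct (Nat.eqb_spec (S N) n); [lia|reflexivity].
    + rewrite IH by lia. ring.
Qed.

Lemma Rabs_mult3_le a b c A B C :
  Rabs a <= A -> Rabs b <= B -> Rabs c <= C -> Rabs (a * b * c) <= A * B * C.
Proof.
  intros Ha Hb Hc. rewrite !Rabs_mult.
  apply Rmult_le_compat; auto using Rabs_pos, Rmult_le_pos.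
  apply Rmult_le_compat; auto using Rabs_pos.
Qed.

Lemma is_RInt_cos_mul_Z (k : Z) :
  is_RInt (fun t => cos (IZR k * t)) 0 PI (if Z.eqb k 0 then PI else 0).
Proof.
  destruct (Z.eqb_spec k 0) as [->|Hk].
  - apply (is_RInt_ext_eq (fun _ => 1) _ _ _ (PI - 0)).
    + intros t _. rewrite Rmult_0_l, cos_0. reflexivity.
    + ring.
    + apply (is_RInt_antiderivative (fun t => t)); intros x.
      * auto_derive; auto.
      * apply continuous_const.
  - apply not_0_IZR in Hk.
    apply (is_RInt_ext_eq (fun t => cos (IZR k * t)) _ _ _
             (sin (IZR k * PI) / IZR k - sin (IZR k * 0) / IZR k)).
    + intros t _. reflexivity.
    + rewrite Rmult_0_r, sin_0, (sin_eq_0_1 _ (ex_intro _ k eq_refl)). field. exact Hk.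
    + apply (is_RInt_antiderivative (fun t => sin (IZR k * t) / IZR k)); intros x.
      * auto_derive; auto. field. exact Hk.
      * apply continuous_of_ex_derive. auto_derive. auto.
Qed.

Lemma is_RInt_sin_mul_sin (m n : nat) :
  is_RInt (fun t => 4 * sin (INR (S m) * t) * sin (INR (S n) * t)) 0 PI
    (if Nat.eqb m n then 2 * PI else 0).
Proof.
  set (d := (Z.of_nat m - Z.of_nat n)%Z). set (s := (Z.of_nat m + Z.of_nat n + 2)%Z).
  apply (is_RInt_ext_eq (fun t => 2 * cos (IZR d * t) + (-2) * cos (IZR s * t)) _ _ _
           (2 * (if Z.eqb d 0 then PI else 0) + (-2) * (if Z.eqb s 0 then PI else 0))).
  - intros t _.
    replace (IZR d * t) with (INR (S m) * t - INR (S n) * t)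
      by (unfold d; rewrite minus_IZR, <- !INR_IZR_INZ, !S_INR; ring).
    replace (IZR s * t) with (INR (S m) * t + INR (S n) * t)
      by (unfold s; rewrite !plus_IZR, <- !INR_IZR_INZ, !S_INR; ring).
    rewrite cos_minus, cos_plus. ring.
  - replace (Z.eqb s 0) with false by (symmetry; apply Z.eqb_neq; unfold s; lia).
    destruct (Nat.eqb_spec m n), (Z.eqb_spec d 0); unfold d in *; try lia; ring.
  - apply is_RInt_Rplus; apply is_RInt_Rmult_l; apply is_RInt_cos_mul_Z.
Qed.

Lemma sqrt_4_minus_2cos_sq t : 0 <= t <= PI -> sqrt (4 - (2 * cos t) ^ 2) = 2 * sin t.
Proof.
  intros Ht. pose proof (sin_ge_0 t (proj1 Ht) (proj2 Ht)). pose proof (sin2_cos2 t).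
  replace (4 - (2 * cos t) ^ 2) with ((2 * sin t) ^ 2) by (unfold Rsqr in *; nra).
  apply sqrt_pow2. lra.
Qed.

Lemma continuous_semicircle x : continuous (fun y => sqrt (4 - y ^ 2)) x.
Proof. apply continuous_sqrt_comp, continuous_of_ex_derive. auto_derive. auto. Qed.

Lemma Rabs_semicircle_le y : Rabs (sqrt (4 - y ^ 2)) <= 2.
Proof.
  rewrite Rabs_pos_eq by apply sqrt_pos.
  rewrite <- (sqrt_pow2 2) by lra. apply sqrt_le_1_alt. nra.
Qed.

Lemma Rabs_pow_shift_le sigma L y :
  -2 <= y <= 2 -> Rabs ((y + sigma) ^ L) <= (2 + Rabs sigma) ^ L.
Proof.
  intros Hy. rewrite <- RPow_abs. apply pow_incr. split; [apply Rabs_pos|].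
  eapply Rle_trans; [apply Rabs_triang|]. apply Rplus_le_compat_r, Rabs_le. lra.
Qed.

Lemma cheb_u_mul_shift m x sigma :
  (x + sigma) * cheb_u m x =
  cheb_u (S m) x + sigma * cheb_u m x + match m with O => 0 | S k => cheb_u k x end.
Proof. destruct m; simpl; ring. Qed.

Lemma continuous_cheb_u n x : continuous (cheb_u n) x.
Proof.
  enough (H : continuous (cheb_u n) x /\ continuous (cheb_u (S n)) x) by apply H.
  induction n as [|n [IH1 IH2]]; split; auto.
  - apply continuous_const.
  - apply continuous_id.
  - apply (continuous_minus (V := R_NormedModule) (fun y => y * cheb_u (S n) y)); auto.
    apply (continuous_mult (K := R_AbsRing)); auto using continuous_id.
Qed.

Lemma sin_mul_cheb_u n t : sin (INR (S n) * t) = sin t * cheb_u n (2 * cos t).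
Proof.
  enough (H : sin (INR (S n) * t) = sin t * cheb_u n (2 * cos t) /\
              sin (INR (S (S n)) * t) = sin t * cheb_u (S n) (2 * cos t)) by apply H.
  induction n as [|n [IH1 IH2]]; split; auto.
  - replace (INR 1 * t) with t by (simpl; ring). simpl. ring.
  - replace (INR 2 * t) with (t + t) by (simpl; ring). rewrite sin_plus. simpl. ring.
  - change (cheb_u (S (S n)) (2 * cos t)) with
      (2 * cos t * cheb_u (S n) (2 * cos t) - cheb_u n (2 * cos t)).
    replace (INR (S (S (S n))) * t) with (INR (S (S n)) * t + t) by (rewrite !S_INR; ring).
    replace (INR (S n) * t) with (INR (S (S n)) * t - t) in IH1 by (rewrite !S_INR; ring).
    rewrite sin_minus in IH1. rewrite sin_plus.
    transitivity (2 * cos t * (sin t * cheb_u (S n) (2 * cos t)) - sin t * cheb_u n (2 * cos t));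
      [rewrite <- IH1, <- IH2 | ]; ring.
Qed.

Lemma cheb_u_invariant n y :
  cheb_u n y ^ 2 + cheb_u (S n) y ^ 2 - y * cheb_u n y * cheb_u (S n) y = 1.
Proof.
  induction n as [|n IH]; [simpl; ring|].
  change (cheb_u (S (S n)) y) with (y * cheb_u (S n) y - cheb_u n y).
  rewrite <- IH. ring.
Qed.

Lemma Rabs_cheb_u_le n y : -2 <= y <= 2 -> Rabs (cheb_u n y) <= INR n + 1.
Proof.
  intros Hy. induction n as [|n IH]; [simpl; rewrite Rabs_R1; lra|].
  rewrite S_INR. pose proof (cheb_u_invariant n y) as Hinv.
  set (u0 := cheb_u n y) in *. set (u1 := cheb_u (S n) y) in *.
  (* completing the square in the invariant gives (u1 - y u0 / 2)^2 <= 1 *)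
  assert (Hd : Rabs (u1 - y / 2 * u0) <= 1).
  { assert (0 <= (1 - y ^ 2 / 4) * u0 ^ 2) by (apply Rmult_le_pos; nra).
    apply Rabs_le. nra. }
  replace u1 with ((u1 - y / 2 * u0) + y / 2 * u0) by ring.
  eapply Rle_trans; [apply Rabs_triang|]. rewrite Rabs_mult.
  assert (Rabs (y / 2) <= 1) by (apply Rabs_le; lra).
  pose proof (Rabs_pos u0). nra.
Qed.

Lemma is_RInt_cheb_u_orthogonal m n :
  is_RInt (fun x => cheb_u m x * cheb_u n x * sqrt (4 - x ^ 2)) (-2) 2
    (if Nat.eqb m n then 2 * PI else 0).
Proof.
  set (f := fun x => cheb_u m x * cheb_u n x * sqrt (4 - x ^ 2)).
  assert (Hf : forall x, continuous f x).
  { intros x. apply (continuous_mult (K := R_AbsRing)); [|apply continuous_semicircle].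
    apply (continuous_mult (K := R_AbsRing)); apply continuous_cheb_u. }
  assert (Hsubst : is_RInt (fun t => scal (- (2 * sin t)) (f (2 * cos t))) 0 PI
                     (RInt f (2 * cos 0) (2 * cos PI))).
  { apply (is_RInt_comp (V := R_CompleteNormedModule) f (fun t => 2 * cos t));
      intros x _; [apply Hf | split].
    - auto_derive; auto. ring.
    - apply continuous_of_ex_derive. auto_derive. auto. }
  assert (Hval : is_RInt (fun t => scal (- (2 * sin t)) (f (2 * cos t))) 0 PI
                   (- (if Nat.eqb m n then 2 * PI else 0))).
  { apply (is_RInt_ext_eq (fun t => (-1) * (4 * sin (INR (S m) * t) * sin (INR (S n) * t)))
             _ _ _ ((-1) * (if Nat.eqb m n then 2 * PI else 0))).
    - intros t Ht. rewrite Rmin_left, Rmax_right in Ht by (pose proof PI_RGT_0; lra).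
      change (scal ?c ?v) with (c * v). unfold f.
      rewrite sqrt_4_minus_2cos_sq, !sin_mul_cheb_u by lra. ring.
    - ring.
    - apply is_RInt_Rmult_l, is_RInt_sin_mul_sin. }
  rewrite cos_0, cos_PI in Hsubst.
  assert (E := is_RInt_unique_R _ _ _ _ Hsubst).
  rewrite (is_RInt_unique_R _ _ _ _ Hval) in E.
  replace (RInt f (2 * 1) (2 * -1)) with (- RInt f (-2) 2) in E.
  - apply (is_RInt_ext_eq f f _ _ (RInt f (-2) 2)); [reflexivity | destruct (Nat.eqb m n); lra |].
    apply is_RInt_RInt_continuous. exact Hf.
  - replace (2 * 1) with 2 by ring. replace (2 * -1) with (-2) by ring.
    apply (opp_RInt_swap (V := R_CompleteNormedModule)), ex_RInt_continuous. auto.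
Qed.

Lemma sumR_app l1 l2 : sumR (l1 ++ l2) = sumR l1 + sumR l2.
Proof. induction l1 as [|a l1 IH]; simpl; [ring|]. unfold sumR in *. rewrite IH. ring. Qed.

Lemma sumR_map_ext {A} (F G : A -> R) l :
  (forall x, In x l -> F x = G x) -> sumR (map F l) = sumR (map G l).
Proof. intros H. f_equal. apply map_ext_in. exact H. Qed.

Lemma sumR_map_scal {A} c (F : A -> R) l :
  sumR (map (fun x => c * F x) l) = c * sumR (map F l).
Proof. induction l as [|a l IH]; unfold sumR in *; simpl; [|rewrite IH]; ring. Qed.

Lemma motzkin_from_head m L g : In g (motzkin_from m L) -> exists t, g = m :: t.
Proof.
  destruct L as [|L]; simpl.
  - intros [<-|[]]. exists []. reflexivity.
  - intros (t & <- & _)%in_map_iff. eauto.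
Qed.

Lemma path_start_motzkin_from m L g : In g (motzkin_from m L) -> path_start g = m.
Proof. intros H. destruct (motzkin_from_head _ _ _ H) as [t ->]. reflexivity. Qed.

Lemma path_end_motzkin_from_le m L g : In g (motzkin_from m L) -> (path_end g <= m + L)%nat.
Proof.
  revert m g. induction L as [|L IH]; intros m g H.
  - destruct H as [<-|[]]. unfold path_end. simpl. lia.
  - cbn [motzkin_from] in H. apply in_map_iff in H. destruct H as (t & <- & Ht).
    assert (Hk : forall k, In t (motzkin_from k L) -> (path_end (m :: t) <= k + L)%nat).
    { intros k Hk. destruct (motzkin_from_head _ _ _ Hk) as [t' ->].
      change (path_end (m :: k :: t')) with (path_end (k :: t')). apply IH, Hk. }
    apply in_app_iff in Ht as [Ht|Ht].
    + destruct m as [|m']; [destruct Ht|]. specialize (Hk _ Ht). lia.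
    + apply in_app_iff in Ht as [Ht|Ht]; specialize (Hk _ Ht); lia.
Qed.

Definition end_weight_sum (sigma : R) (n : nat) (l : list (list nat)) : R :=
  sumR (map (path_weight sigma) (filter (fun g => Nat.eqb (path_end g) n) l)).

Lemma end_weight_sum_app sigma n l1 l2 :
  end_weight_sum sigma n (l1 ++ l2) = end_weight_sum sigma n l1 + end_weight_sum sigma n l2.
Proof. unfold end_weight_sum. rewrite filter_app, map_app. apply sumR_app. Qed.

Lemma end_weight_sum_cons sigma n m k (l : list (list nat)) :
  (forall g, In g l -> exists t, g = k :: t) ->
  end_weight_sum sigma n (map (cons m) l) =
  sigma ^ (if Nat.eqb m k then 1 else 0) * end_weight_sum sigma n l.
Proof.
  unfold end_weight_sum.
  induction l as [|g l IH]; intros Hl; [simpl; ring|].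
  destruct (Hl g (or_introl eq_refl)) as [t ->].
  specialize (IH (fun g Hg => Hl g (or_intror Hg))).
  cbn [map filter]. change (path_end (m :: k :: t)) with (path_end (k :: t)).
  destruct (Nat.eqb (path_end (k :: t)) n); [|exact IH].
  cbn [map]. unfold sumR in *. cbn [fold_right]. rewrite IH.
  unfold path_weight. cbn [flat_steps]. rewrite pow_add. ring.
Qed.

Lemma motzkin_weight_sum_O sigma m n :
  motzkin_weight_sum sigma 0 m n = if Nat.eqb m n then 1 else 0.
Proof.
  unfold motzkin_weight_sum, path_end. simpl.
  destruct (Nat.eqb m n); unfold sumR, path_weight; simpl; ring.
Qed.

Lemma motzkin_weight_sum_S sigma L m n :
  motzkin_weight_sum sigma (S L) m n =
  motzkin_weight_sum sigma L (S m) n + sigma * motzkin_weight_sum sigma L m n +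
  match m with O => 0 | S k => motzkin_weight_sum sigma L k n end.
Proof.
  assert (E : forall L m,
    motzkin_weight_sum sigma L m n = end_weight_sum sigma n (motzkin_from m L)) by reflexivity.
  rewrite !E. cbn [motzkin_from]. rewrite !map_app, !end_weight_sum_app.
  rewrite (end_weight_sum_cons _ _ m (S m) (motzkin_from (S m) L)),
    (end_weight_sum_cons _ _ m m (motzkin_from m L)) by apply motzkin_from_head.
  rewrite Nat.eqb_refl. replace (Nat.eqb m (S m)) with false by (symmetry; apply Nat.eqb_neq; lia).
  destruct m as [|k]; [unfold end_weight_sum; simpl; ring|].
  rewrite (end_weight_sum_cons _ _ (S k) k), E by apply motzkin_from_head.
  replace (Nat.eqb (S k) k) with false by (symmetry; apply Nat.eqb_neq; lia).
  simpl. ring.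
Qed.

Lemma motzkin_weight_sum_far sigma L m n :
  (m + L < n)%nat -> motzkin_weight_sum sigma L m n = 0.
Proof.
  intros Hn. unfold motzkin_weight_sum.
  rewrite (filter_ext_in _ (fun _ => false)), filter_false; [reflexivity|].
  intros g Hg. apply Nat.eqb_neq. apply path_end_motzkin_from_le in Hg. lia.
Qed.

Lemma sumR_map_group_end (F : nat -> R) (w : list nat -> R) l N :
  (forall g, In g l -> (path_end g <= N)%nat) ->
  sumR (map (fun g => F (path_end g) * w g) l) =
  sum_f_R0 (fun n => F n * sumR (map w (filter (fun g => Nat.eqb (path_end g) n) l))) N.
Proof.
  induction l as [|g l IH]; intros Hl.
  - symmetry. apply sum_eq_R0. intros n _. unfold sumR. simpl. ring.
  - rewrite (sum_eq _ (fun n => (if Nat.eqb (path_end g) n then F n * w g else 0) +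
         F n * sumR (map w (filter (fun g => Nat.eqb (path_end g) n) l)))).
    + rewrite sum_plus, sum_f_R0_indicator, <- IH by (intros; apply Hl; simpl; auto).
      unfold sumR. simpl. ring.
    + intros n _. simpl. destruct (Nat.eqb (path_end g) n); unfold sumR; simpl; ring.
Qed.

Lemma sumR_motzkin_from_endpoints sigma L (alpha beta : nat -> R) z0 z1 m :
  sumR (map (fun g => alpha (path_start g) * beta (path_end g) * path_weight sigma g
                      * z0 ^ path_start g * z1 ^ path_end g) (motzkin_from m L))
  = alpha m * z0 ^ m * Series (fun n => beta n * z1 ^ n * motzkin_weight_sum sigma L m n).
Proof.
  rewrite (sumR_map_ext _ (fun g => alpha m * z0 ^ m *
             (beta (path_end g) * z1 ^ path_end g * path_weight sigma g))).
  2:{ intros g Hg. rewrite (path_start_motzkin_from _ _ _ Hg). ring. }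
  rewrite sumR_map_scal, (sumR_map_group_end (fun n => beta n * z1 ^ n) _ _ (m + L))
    by apply path_end_motzkin_from_le.
  rewrite (Series_eventually_zero _ (m + L)); [reflexivity|].
  intros n Hn. rewrite motzkin_weight_sum_far by lia. ring.
Qed.

Definition endpoint_series (sigma : R) (L : nat) (alpha beta : nat -> R) (z0 z1 : R) : R :=
  Series (fun m => alpha m * z0 ^ m *
    Series (fun n => beta n * z1 ^ n * motzkin_weight_sum sigma L m n)).

Lemma partition_fn_eq sigma L alpha beta :
  partition_fn alpha beta sigma L = endpoint_series sigma L alpha beta 1 1.
Proof.
  apply Series_ext. intros m. rewrite <- sumR_motzkin_from_endpoints.
  apply sumR_map_ext. intros g _. rewrite !pow1. ring.
Qed.

Lemma expect_gen_eq sigma L alpha beta z0 z1 :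
  expect_gen alpha beta sigma L z0 z1 =
  endpoint_series sigma L alpha beta z0 z1 / partition_fn alpha beta sigma L.
Proof.
  unfold expect_gen, sum_over_paths, endpoint_series, Rdiv.
  rewrite Rmult_comm, <- Series_scal_l.
  apply Series_ext. intros m.
  rewrite <- sumR_motzkin_from_endpoints, <- sumR_map_scal.
  apply sumR_map_ext. intros g _. unfold path_prob, Rdiv. ring.
Qed.

Lemma is_RInt_cheb_u_moment sigma L : forall m n,
  is_RInt (fun x => cheb_u m x * cheb_u n x * (x + sigma) ^ L * sqrt (4 - x ^ 2)) (-2) 2
    (2 * PI * motzkin_weight_sum sigma L m n).
Proof.
  induction L as [|L IH]; intros m n.
  - rewrite motzkin_weight_sum_O.
    eapply is_RInt_ext_eq; [| | apply (is_RInt_cheb_u_orthogonal m n)].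
    + intros x _. simpl. ring.
    + destruct (Nat.eqb m n); ring.
  - rewrite motzkin_weight_sum_S.
    set (v := fun k x => cheb_u k x * cheb_u n x * (x + sigma) ^ L * sqrt (4 - x ^ 2)).
    assert (Hmul : forall x,
      cheb_u m x * cheb_u n x * (x + sigma) ^ S L * sqrt (4 - x ^ 2) =
      ((x + sigma) * cheb_u m x) * cheb_u n x * (x + sigma) ^ L * sqrt (4 - x ^ 2))
      by (intros x; simpl; ring).
    destruct m as [|k].
    + eapply (is_RInt_ext_eq (fun x => v 1%nat x + sigma * v 0%nat x)).
      3: apply is_RInt_Rplus; [|apply is_RInt_Rmult_l]; apply IH.
      * intros x _. rewrite Hmul, cheb_u_mul_shift. unfold v. ring.
      * ring.
    + eapply (is_RInt_ext_eq (fun x => v (S (S k)) x + sigma * v (S k) x + v k x)).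
      3: apply is_RInt_Rplus; [apply is_RInt_Rplus; [|apply is_RInt_Rmult_l]|]; apply IH.
      * intros x _. rewrite Hmul, cheb_u_mul_shift. unfold v. ring.
      * ring.
Qed.

Lemma Rabs_coef_cheb_u_le (a : nat -> R) z n y :
  0 <= a n -> Rabs z <= 1 -> -2 <= y <= 2 ->
  Rabs (a n * z ^ n * cheb_u n y) <= a n * (INR n + 1).
Proof.
  intros Ha Hz Hy.
  rewrite !Rabs_mult, <- RPow_abs, (Rabs_pos_eq (a n) Ha).
  assert (Rabs z ^ n <= 1) by (rewrite <- (pow1 n); apply pow_incr; auto using Rabs_pos).
  pose proof (pow_le (Rabs z) n (Rabs_pos z)). pose proof (Rabs_cheb_u_le n y Hy).
  pose proof (Rabs_pos (cheb_u n y)). pose proof (pos_INR n).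
  rewrite Rmult_assoc. apply Rmult_le_compat_l; [exact Ha|].
  rewrite <- (Rmult_1_l (INR n + 1)). apply Rmult_le_compat; auto.
Qed.

Lemma ex_series_mul_succ (a : nat -> R) :
  (forall n, 0 <= a n) -> ex_series (fun n => INR n * a n) ->
  ex_series (fun n => a n * (INR n + 1)).
Proof.
  intros Ha H.
  (* from index 1 on, a_n (n + 1) <= 2 n a_n *)
  apply (ex_series_incr_1 (K := R_AbsRing) (V := R_NormedModule)).
  apply (ex_series_incr_1 (K := R_AbsRing) (V := R_NormedModule)) in H.
  apply (ex_series_Rabs_le _ (fun n => 2 * (INR (S n) * a (S n)))).
  - intros n. pose proof (Ha (S n)). pose proof (pos_INR n).
    rewrite S_INR, Rabs_pos_eq; nra.
  - apply (ex_series_scal_l (K := R_AbsRing) (V := R_NormedModule)), H.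
Qed.

Lemma Rabs_Phi_le (a : nat -> R) z y :
  (forall n, 0 <= a n) -> Rabs z <= 1 -> -2 <= y <= 2 ->
  ex_series (fun n => a n * (INR n + 1)) ->
  Rabs (Phi a z y) <= Series (fun n => a n * (INR n + 1)).
Proof.
  intros Ha Hz Hy HB. unfold Phi.
  assert (Hle := fun n => Rabs_coef_cheb_u_le a z n y (Ha n) Hz Hy).
  eapply Rle_trans; [apply Series_Rabs|apply Series_le; auto using Rabs_pos].
  apply (ex_series_Rabs_le _ _ (fun n => ltac:(rewrite Rabs_Rabsolu; apply Hle)) HB).
Qed.

Section GeneratingFunctions.

Variables (sigma : R) (L : nat).

Lemma is_RInt_Phi_mul_cheb_u (beta : nat -> R) z m :
  (forall n, 0 <= beta n) -> ex_series (fun n => INR n * beta n) -> Rabs z <= 1 ->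
  is_RInt (fun x => Phi beta z x * (cheb_u m x * (x + sigma) ^ L * sqrt (4 - x ^ 2))) (-2) 2
    (2 * PI * Series (fun n => beta n * z ^ n * motzkin_weight_sum sigma L m n)).
Proof.
  intros Hb Hmom Hz.
  rewrite <- Series_scal_l.
  apply (is_RInt_Series_mul _ _ (fun n => beta n * (INR n + 1)) _
           ((INR m + 1) * (2 + Rabs sigma) ^ L * 2)).
  - lra.
  - apply ex_series_mul_succ; auto.
  - intros n x Hx. apply Rabs_coef_cheb_u_le; auto.
  - intros x Hx. apply Rabs_mult3_le;
      auto using Rabs_cheb_u_le, Rabs_pow_shift_le, Rabs_semicircle_le.
  - intros n. eapply is_RInt_ext_eq;
      [| |exact (is_RInt_Rmult_l _ _ _ (beta n * z ^ n) _ (is_RInt_cheb_u_moment sigma L m n))].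
    + intros x _. cbv beta. ring.
    + ring.
Qed.

Lemma is_RInt_Mfun_integrand (alpha beta : nat -> R) z0 z1 :
  (forall n, 0 <= alpha n) -> (forall n, 0 <= beta n) ->
  ex_series (fun n => INR n * alpha n) -> ex_series (fun n => INR n * beta n) ->
  Rabs z0 <= 1 -> Rabs z1 <= 1 ->
  is_RInt (fun x => Phi alpha z0 x * Phi beta z1 x * (x + sigma) ^ L * sqrt (4 - x ^ 2)) (-2) 2
    (2 * PI * Series (fun m => alpha m * z0 ^ m *
       Series (fun n => beta n * z1 ^ n * motzkin_weight_sum sigma L m n))).
Proof.
  intros Ha Hb Hma Hmb Hz0 Hz1.
  rewrite <- Series_scal_l.
  eapply is_RInt_ext_eq
    with (f := fun x => Phi alpha z0 x * (Phi beta z1 x * (x + sigma) ^ L * sqrt (4 - x ^ 2)));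
    [intros x _; ring | reflexivity |].
  apply (is_RInt_Series_mul _ _ (fun n => alpha n * (INR n + 1)) _
           (Series (fun n => beta n * (INR n + 1)) * (2 + Rabs sigma) ^ L * 2)).
  - lra.
  - apply ex_series_mul_succ; auto.
  - intros n x Hx. apply Rabs_coef_cheb_u_le; auto.
  - intros x Hx. apply Rabs_mult3_le; auto using Rabs_pow_shift_le, Rabs_semicircle_le.
    apply Rabs_Phi_le; auto using ex_series_mul_succ.
  - intros m. eapply is_RInt_ext_eq;
      [| |exact (is_RInt_Rmult_l _ _ _ (alpha m * z0 ^ m) _
                 (is_RInt_Phi_mul_cheb_u beta z1 m Hb Hmb Hz1))].
    + intros x _. cbv beta. ring.
    + ring.
Qed.

End GeneratingFunctions.

Lemma Mfun_eq sigma L alpha beta z0 z1 :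
  (forall n, 0 <= alpha n) -> (forall n, 0 <= beta n) ->
  ex_series (fun n => INR n * alpha n) -> ex_series (fun n => INR n * beta n) ->
  Rabs z0 <= 1 -> Rabs z1 <= 1 ->
  Mfun alpha beta sigma L z0 z1 = endpoint_series sigma L alpha beta z0 z1.
Proof.
  intros Ha Hb Hma Hmb Hz0 Hz1. unfold Mfun, endpoint_series.
  rewrite (is_RInt_unique_R _ _ _ _ (is_RInt_Mfun_integrand sigma L alpha beta z0 z1
                                         Ha Hb Hma Hmb Hz0 Hz1)).
  field. apply PI_neq0.
Qed.

Theorem lemma3p1 (sigma : R) (alpha beta : nat -> R)
  (Hsigma : 0 < sigma)
  (Ha0 : forall n, 0 <= alpha n) (Hb0 : forall n, 0 <= beta n)
  (Ha_nz : exists n, alpha n <> 0) (Hb_nz : exists n, beta n <> 0)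
  (Ha_mom : ex_series (fun n => INR n * alpha n))
  (Hb_mom : ex_series (fun n => INR n * beta n)) :
  forall L : nat, (1 <= L)%nat ->
    (forall m n : nat,
       / (2 * PI) * RInt (fun x => cheb_u m x * cheb_u n x * (x + sigma) ^ L
                                   * sqrt (4 - x ^ 2)) (-2) 2
       = motzkin_weight_sum sigma L m n)
    /\
    (forall z0 z1 : R, Rabs z0 <= 1 -> Rabs z1 <= 1 ->
       expect_gen alpha beta sigma L z0 z1
       = Mfun alpha beta sigma L z0 z1 / Mfun alpha beta sigma L 1 1).
Proof.
  intros L _. split.
  - intros m n. rewrite (is_RInt_unique_R _ _ _ _ (is_RInt_cheb_u_moment sigma L m n)).
    field. apply PI_neq0.
  - intros z0 z1 Hz0 Hz1.
    assert (H1 : Rabs 1 <= 1) by (rewrite Rabs_R1; lra).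
    rewrite expect_gen_eq, partition_fn_eq, !Mfun_eq; auto.
Qed.
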